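(* For any embedded rectangle $R=(B,A_1,A_2)$ with $B\subseteq EB^{-1}(1)$ we have $\alpha(R)\le 2^{-2m(R)}$.
   Context: $D$ is a finite domain. Two elements $x=(x_1,x_2)$, $y=(y_1,y_2)$ of $D\times D$ are bidistinct if $x_1\ne y_2$ and $x_2\ne y_1$. $EB:(D\times D)^n\to\{0,1\}$ equals $1$ iff for all $1\le i,j\le n$ the $i$-th and $j$-th pairs are bidistinct; inputs are viewed as functions $[1,n]\to D'$ with $D'=D\times D$. For $A\subseteq[1,n]$, a partial input on $A$ is a function $A\to D'$; for disjoint $A_1,A_2$ and partial inputs $\tau_1,\tau_2$ on them, $\tau_1\tau_2$ is the partial input on $A_1\cup A_2$ agreeing with each. For $B\subseteq D'^{[1,n]}$, $B_A$ is the set of partial inputs on $A$ that agree with some input in $B$. An embedded rectangle is a triple $R=(B,A_1,A_2)$ with $A_1,A_2\subseteq[1,n]$ disjoint and $B\subseteq D'^{[1,n]}$ such that (i) $B_{[1,n]\setminus(A_1\cup A_2)}$ consists of a single partial input $\sigma$ and (ii) whenever $\tau_1\in B_{A_1}$ and $\tau_2\in B_{A_2}$, $\tau_1\tau_2\sigma\in B$. Define $m_j(R)=|A_j|$, $m(R)=\min(m_1(R),m_2(R))$, $\alpha_j(R)=|B_{A_j}|/|D'|^{|A_j|}$, $\alpha(R)=\min(\alpha_1(R),\alpha_2(R))$. *)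

From HB Require Import structures.
From mathcomp Require Import all_boot all_order all_algebra.
Set Implicit Arguments. Unset Strict Implicit. Unset Printing Implicit Defensive.
Import Order.TTheory GRing.Theory Num.Theory.

(* Positions [1,n] are represented by 'I_n; D' = D * D; an input is a
   finite function 'I_n -> D * D. *)
Section EB.
Variables (D : finType) (n : nat).

Definition input := {ffun 'I_n -> D * D}.

Definition bidistinct (x y : D * D) : bool := (x.1 != y.2) && (x.2 != y.1).

Definition EB (x : input) : bool :=
  [forall i : 'I_n, forall j : 'I_n, bidistinct (x i) (x j)].

Definition restr (A : {set 'I_n}) (x : input) : {ffun 'I_n -> option (D * D)} :=
  [ffun i => if i \in A then Some (x i) else None].

Definition proj (B : {set input}) (A : {set 'I_n}) :=
  [set restr A x | x in B].

(* tau1 tau2 sigma, with tau_j = restriction of x_j to A_j and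
   sigma = restriction of x3 to the complement. *)
Definition glue (A1 A2 : {set 'I_n}) (x1 x2 x3 : input) : input :=
  [ffun i => if i \in A1 then x1 i else if i \in A2 then x2 i else x3 i].

Definition embedded_rectangle (B : {set input}) (A1 A2 : {set 'I_n}) : Prop :=
  [disjoint A1 & A2] /\
  #|proj B (~: (A1 :|: A2))| = 1%N /\
  (forall x1 x2 x3, x1 \in B -> x2 \in B -> x3 \in B -> glue A1 A2 x1 x2 x3 \in B).

Local Open Scope ring_scope.

Definition alpha_j (B : {set input}) (A : {set 'I_n}) : rat :=
  (#|proj B A|)%:R / (#|{: D * D}| ^ #|A|)%:R.

Definition alpha (B : {set input}) (A1 A2 : {set 'I_n}) : rat :=
  Num.min (alpha_j B A1) (alpha_j B A2).

Definition m_rect (A1 A2 : {set 'I_n}) : nat := minn #|A1| #|A2|.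

End EB.

From mathcomp Require Import all_boot all_order all_algebra.
From mathcomp Require Import zify.
Import Order.TTheory GRing.Theory Num.Theory.
Set Implicit Arguments. Unset Strict Implicit. Unset Printing Implicit Defensive.
Local Open Scope ring_scope.

(* Let L_j (resp. R_j) be the first (resp. second) coordinates occurring on
   A_j in inputs of B.  Gluing two inputs of B across the rectangle and using
   bidistinctness shows that L_1, R_2 are disjoint, as are R_1, L_2, so
   |L_1| + |R_2| <= |D| and |R_1| + |L_2| <= |D|.  By AM-GM the product of
   |L_1||R_1| and |L_2||R_2| is at most (|D|^2/4)^2, hence one side j has
   |L_j||R_j| <= |D|^2/4, and |B_{A_j}| <= (|L_j||R_j|)^|A_j| gives
   alpha_j <= 4^(-|A_j|) <= 4^(-m). *)

Lemma leq_mul_sqr_either (x y z : nat) :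
  (x * y <= z * z)%N -> (x <= z)%N \/ (y <= z)%N.
Proof.
move=> xyz; case: (leqP x z) => [|zx]; [by left | right].
rewrite leqNgt; apply/negP => zy.
by have := leq_ltn_trans xyz (ltn_mul zx zy); rewrite ltnn.
Qed.

Lemma nat_AGM2_cross (a b c e d : nat) :
  (a + e <= d)%N -> (b + c <= d)%N ->
  (4 * (a * b) <= d * d)%N \/ (4 * (c * e) <= d * d)%N.
Proof.
move=> aed bcd; apply: leq_mul_sqr_either.
have AGM x y : (x + y <= d)%N -> (4 * (x * y) <= d * d)%N.
  by move=> xyd; apply: leq_trans (nat_AGM2 x y).1 _; rewrite expnS expn1 leq_mul.
have -> : (4 * (a * b) * (4 * (c * e)) = 4 * (a * e) * (4 * (b * c)))%N by nia.
by rewrite leq_mul ?AGM.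
Qed.

Lemma ratr_ler_invn (p q k : nat) :
  (0 < k)%N -> (p * k <= q)%N -> (p%:R / q%:R : rat) <= k%:R^-1.
Proof.
move=> k_gt0 pkq; have [->|q_gt0] := posnP q.
  by rewrite invr0 mulr0 invr_ge0 ler0n.
rewrite ler_pdivrMr ?ltr0n // ler_pdivlMl ?ltr0n //.
by rewrite -natrM ler_nat mulnC.
Qed.

Section Rectangle.
Variables (D : finType) (n : nat).
Implicit Types (B : {set input D n}) (A : {set 'I_n}).

Lemma card_proj_le B A (S : {set D * D}) :
  (forall x i, x \in B -> i \in A -> x i \in S) ->
  (#|proj B A| <= #|S| ^ #|A|)%N.
Proof.
move=> BS.
apply: leq_trans (_ : #|pffun_on None A (Some @: S)| <= _)%N; last first.
  by rewrite card_pffun_on card_imset //; apply: Some_inj.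
apply/subset_leq_card/subsetP => _ /imsetP [x xB ->].
apply/pffun_onP; split=> [|_ /imageP [i iA ->]].
  by apply/subsetP => i; rewrite inE ffunE; case: ifP.
by rewrite ffunE iA imset_f ?BS.
Qed.

Definition fst_coords B A : {set D} :=
  [set (x i).1 | x : input D n in B, i : 'I_n in A].
Definition snd_coords B A : {set D} :=
  [set (x i).2 | x : input D n in B, i : 'I_n in A].

Lemma card_proj_coords B A :
  (#|proj B A| <= (#|fst_coords B A| * #|snd_coords B A|) ^ #|A|)%N.
Proof.
rewrite -cardsX; apply: card_proj_le => x i xB iA.
by rewrite inE !imset2_f.
Qed.

Variables (B : {set input D n}) (A1 A2 : {set 'I_n}).
Hypotheses (rectB : embedded_rectangle B A1 A2) (EB_B : B \subset [set x | EB x]).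

Lemma bidistinct_across {x1 x2 : input D n} {i j : 'I_n} :
  x1 \in B -> x2 \in B -> i \in A1 -> j \in A2 -> bidistinct (x1 i) (x2 j).
Proof.
case: rectB => disA [_ glueB] x1B x2B iA1 jA2.
have := subsetP EB_B _ (glueB _ _ _ x1B x2B x1B).
rewrite inE => /forallP /(_ i) /forallP /(_ j).
by rewrite !ffunE iA1 (disjointFl disA jA2) jA2.
Qed.

Lemma card_fst_snd_coords :
  (#|fst_coords B A1| + #|snd_coords B A2| <= #|D|)%N /\
  (#|snd_coords B A1| + #|fst_coords B A2| <= #|D|)%N.
Proof.
have card_disjoint (X Y : {set D}) : [disjoint X & Y] -> (#|X| + #|Y| <= #|D|)%N.
  by rewrite -(leq_card_setU X Y).2 => /eqP <-; apply: max_card.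
split; apply/card_disjoint/pred0P => y /=; apply/negbTE/andP;
  case=> /imset2P [x1 i x1B iA1 ->] /imset2P [x2 j x2B jA2] e;
  have := bidistinct_across x1B x2B iA1 jA2; rewrite /bidistinct e eqxx ?andbF //.
Qed.

End Rectangle.

Theorem lemma10 (D : finType) (n : nat) (B : {set input D n})
    (A1 A2 : {set 'I_n}) :
  embedded_rectangle B A1 A2 ->
  B \subset [set x | EB x] ->
  alpha B A1 A2 <= ((2 ^ (2 * m_rect A1 A2))%N%:R)^-1.
Proof.
move=> rectB EB_B; set m := m_rect A1 A2.
have alpha_j_le (A : {set 'I_n}) : (m <= #|A|)%N ->
    (4 * (#|fst_coords B A| * #|snd_coords B A|) <= #|D| * #|D|)%N ->
    alpha_j B A <= ((2 ^ (2 * m))%N%:R)^-1.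
  move=> mA quarter; rewrite /alpha_j card_prod expnM.
  apply: ratr_ler_invn; first by rewrite expn_gt0.
  apply: leq_trans (leq_mul (card_proj_coords B A) (leq_pexp2l _ mA)) _ => //.
  by rewrite -expnMn mulnC; case: #|A| => // k; rewrite leq_exp2r.
have [cardL1R2 cardR1L2] := card_fst_snd_coords rectB EB_B.
rewrite /alpha ge_min.
have [quarter1|quarter2] := nat_AGM2_cross cardL1R2 cardR1L2.
- by rewrite alpha_j_le // geq_minl.
- by rewrite orbC alpha_j_le // geq_minr.
Qed.
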